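(* In the linear setting described in the context, let $\mathbf P_t^s$ be defined by $\mathbf P_t^0=\mathbf P_t$ and $\mathbf P_t^{s+1}=\boldsymbol\theta_{t-s-1}^{-1}\mathbf P_t^s\boldsymbol\theta_{t-s-1}$ ($0\le s<t\le T$). Then for each $0\le s\le T$, $$\|\mathbf P_s^s-\mathbf P_0\|_2\le\big(1+\kappa(\overline{\boldsymbol\theta}_s)^2\big)\,\|\mathbf I-\overline{\boldsymbol\theta}_s^T\overline{\boldsymbol\theta}_s\|_2,$$ where $\overline{\boldsymbol\theta}_0=\mathbf I$ and $\overline{\boldsymbol\theta}_s=\boldsymbol\theta_{s-1}\cdots\boldsymbol\theta_0$ for $s\ge1$.
   Context: Linear setting: fix integers $1\le r\le d$ and $T\ge1$. For $t=0,\dots,T$, $Z^t\subset\mathbb{R}^d$ is an $r$-dimensional linear subspace and $\mathbf P_t$ is the orthogonal projection onto $Z^t$. For $t=0,\dots,T-1$, $\boldsymbol\theta_t\in\mathbb{R}^{d\times d}$ is invertible with $\boldsymbol\theta_tZ^t=Z^{t+1}$. $\|\cdot\|_2$ is the spectral norm and $\kappa(\mathbf A)=\|\mathbf A\|_2\|\mathbf A^{-1}\|_2$. *)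

From HB Require Import structures.
From mathcomp Require Import all_boot all_order all_algebra.
From mathcomp Require Import classical_sets reals.
Set Implicit Arguments. Unset Strict Implicit. Unset Printing Implicit Defensive.
Import Order.TTheory GRing.Theory Num.Theory.
Local Open Scope ring_scope.
Local Open Scope classical_set_scope.

Section Defs.
Variable R : realType.
Variable d : nat.

Definition vnorm (v : 'cV[R]_d) : R := Num.sqrt (\sum_i (v i 0) ^+ 2).

Definition opnorm (A : 'M[R]_d) : R :=
  sup [set vnorm (A *m v) | v in [set v : 'cV[R]_d | vnorm v = 1]].

Definition kappa (A : 'M[R]_d) : R := opnorm A * opnorm (invmx A).

(* A linear subspace of R^d is represented by a matrix Z whose row space
   (in mxalgebra) spans it; column vector v lies in it iff v^T is in that row space. *)
Definition insub (Z : 'M[R]_d) (v : 'cV[R]_d) : Prop := (v^T <= Z)%MS.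

Definition is_orth_proj (P Z : 'M[R]_d) : Prop :=
  forall v : 'cV[R]_d, insub Z (P *m v) /\
    (forall w : 'cV[R]_d, insub Z w -> w^T *m (v - P *m v) = 0).

Definition maps_onto (A Z Z' : 'M[R]_d) : Prop :=
  (forall v, insub Z v -> insub Z' (A *m v)) /\
  (forall w, insub Z' w -> exists2 v, insub Z v & w = A *m v).

Fixpoint thetabar (theta : nat -> 'M[R]_d) (s : nat) : 'M[R]_d :=
  match s with
  | 0 => 1%:M
  | s'.+1 => theta s' *m thetabar theta s'
  end.

Fixpoint Pts (theta P : nat -> 'M[R]_d) (t s : nat) : 'M[R]_d :=
  match s with
  | 0 => P t
  | s'.+1 => invmx (theta (t - s'.+1)%N) *m Pts theta P t s' *m theta (t - s'.+1)%N
  end.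

End Defs.

From Pilot Require Import Defs.
From HB Require Import structures.
From mathcomp Require Import all_boot all_order all_algebra.
From mathcomp Require Import classical_sets reals.
From mathcomp Require Import ring lra.
Import Order.TTheory GRing.Theory Num.Theory.
Local Open Scope ring_scope.
Set Implicit Arguments. Unset Strict Implicit. Unset Printing Implicit Defensive.

(* Write B for thetabar_s and X for |I - B^T B|, so that | |Bx|^2 - |x|^2 | <= X |x|^2;
   this gives kappa(B)^2 (1 - X) <= 1 + X, i.e. kappa(B)^2 - 1 <= (1 + kappa(B)^2) X.
   Unwinding the recursion, P_s^s = B^-1 P_s B =: Q, and since B maps Z_0 onto Z_s,
   Q fixes Z_0 and has range Z_0.  For a unit vector v put u = v - P_0 v and w = Q u:
   then (Q - P_0) v = w, w is orthogonal to u, |u| <= 1, and Bw = P_s (Bu) gives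
   |Bw|^2 = <Bw, Bu>.  Comparing |B(w + l u)|^2 <= |B|^2 |w + l u|^2 with
   |w - l u|^2 <= |B^-1|^2 |B(w - l u)|^2 eliminates |Bu|^2 and, at l = |w|,
   yields 2|w| <= kappa(B)^2 - 1. *)

Section EuclideanSpace.
Variable R : realType.
Variable d : nat.
Implicit Types (x y z : 'cV[R]_d) (A : 'M[R]_d).

Definition dot x y : R := (x^T *m y) 0 0.

Lemma dotC x y : dot x y = dot y x.
Proof. by rewrite /dot !mxE; apply: eq_bigr => i _; rewrite !mxE mulrC. Qed.

Lemma dotDr x y z : dot x (y + z) = dot x y + dot x z.
Proof. by rewrite /dot mulmxDr mxE. Qed.

Lemma dotZr x c y : dot x (c *: y) = c * dot x y.
Proof. by rewrite /dot -scalemxAr mxE. Qed.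

Lemma dotBr x y z : dot x (y - z) = dot x y - dot x z.
Proof. by rewrite /dot mulmxBr !mxE. Qed.

Lemma dotDl x y z : dot (y + z) x = dot y x + dot z x.
Proof. by rewrite dotC dotDr !(dotC x). Qed.

Lemma dotZl x c y : dot (c *: y) x = c * dot y x.
Proof. by rewrite dotC dotZr dotC. Qed.

Lemma dotBl x y z : dot (y - z) x = dot y x - dot z x.
Proof. by rewrite dotC dotBr !(dotC x). Qed.

Lemma dot0r x : dot x 0 = 0.
Proof. by rewrite /dot mulmx0 mxE. Qed.

Lemma dot_mulmxl A x y : dot (A *m x) y = dot x (A^T *m y).
Proof. by rewrite /dot trmx_mul mulmxA. Qed.

Lemma dotxx x : dot x x = \sum_i (x i 0) ^+ 2.
Proof. by rewrite /dot mxE; apply: eq_bigr => i _; rewrite mxE expr2. Qed.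

Lemma dotxx_ge0 x : 0 <= dot x x.
Proof. by rewrite dotxx; apply: sumr_ge0 => i _; apply: sqr_ge0. Qed.

Lemma dotxx_eq0 x : dot x x = 0 -> x = 0.
Proof.
rewrite dotxx => /eqP; rewrite psumr_eq0 => [/allP x0|i _]; last exact: sqr_ge0.
apply/matrixP => i j; rewrite ord1 mxE.
by have := x0 i (mem_index_enum i); rewrite sqrf_eq0 => /eqP.
Qed.

Lemma dot_lincomb a b x y : dot (a *: x + b *: y) (a *: x + b *: y) =
  a ^+ 2 * dot x x + 2 * a * b * dot x y + b ^+ 2 * dot y y.
Proof. rewrite dotDl !dotDr !dotZl !dotZr (dotC y x); ring. Qed.

Lemma vnormE x : vnorm x = Num.sqrt (dot x x).
Proof. by rewrite /vnorm dotxx. Qed.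

Lemma vnorm_ge0 x : 0 <= vnorm x.
Proof. exact: sqrtr_ge0. Qed.

Lemma vnorm_sqr x : vnorm x ^+ 2 = dot x x.
Proof. by rewrite vnormE sqr_sqrtr // dotxx_ge0. Qed.

Lemma vnormZ c x : vnorm (c *: x) = `|c| * vnorm x.
Proof.
by rewrite !vnormE dotZl dotZr mulrA -expr2 sqrtrM ?sqr_ge0 // sqrtr_sqr.
Qed.

Lemma cauchy_schwarz x y : dot x y ^+ 2 <= dot x x * dot y y.
Proof.
have [y0|ny0] := eqVneq (dot y y) 0.
  by rewrite (dotxx_eq0 y0) dot0r expr0n mulr_ge0 // dotxx_ge0.
have yy_gt0 : 0 < dot y y by rewrite lt_def ny0 dotxx_ge0.
have := dotxx_ge0 (dot y y *: x + (- dot x y) *: y); rewrite dot_lincomb.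
have -> : dot y y ^+ 2 * dot x x + 2 * dot y y * - dot x y * dot x y +
    (- dot x y) ^+ 2 * dot y y = dot y y * (dot x x * dot y y - dot x y ^+ 2).
  by ring.
by rewrite pmulr_rge0 // subr_ge0.
Qed.

Lemma norm_dot_le x y : `|dot x y| <= vnorm x * vnorm y.
Proof.
rewrite -ler_sqr ?nnegrE ?mulr_ge0 ?vnorm_ge0 //.
by rewrite real_normK ?num_real // exprMn !vnorm_sqr cauchy_schwarz.
Qed.

End EuclideanSpace.

Section OperatorNorm.
Variable R : realType.
Variable d : nat.
Implicit Types (x : 'cV[R]_d) (A : 'M[R]_d).

Lemma vnorm_mulmx_bounded A : exists K, forall x, vnorm (A *m x) <= K * vnorm x.
Proof.
pose row_i i : 'cV[R]_d := \col_j A i j.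
have rows_ge0 : 0 <= \sum_i dot (row_i i) (row_i i).
  by apply: sumr_ge0 => i _; exact: dotxx_ge0.
exists (Num.sqrt (\sum_i dot (row_i i) (row_i i))) => x.
rewrite !vnormE -sqrtrM // ler_sqrt; last by rewrite mulr_ge0 ?dotxx_ge0.
rewrite dotxx mulr_suml; apply: ler_sum => i _.
have -> : (A *m x) i 0 = dot (row_i i) x.
  by rewrite /dot !mxE; apply: eq_bigr => j _; rewrite !mxE.
exact: cauchy_schwarz.
Qed.

Lemma vnorm_mulmx_le A x : vnorm (A *m x) <= opnorm A * vnorm x.
Proof.
have [K HK] := vnorm_mulmx_bounded A.
have [x0|nx0] := eqVneq (vnorm x) 0.
  have /dotxx_eq0 -> : dot x x = 0 by rewrite -vnorm_sqr x0 expr0n.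
  by rewrite mulmx0 !vnormE dot0r sqrtr0 mulr0.
have x_gt0 : 0 < vnorm x by rewrite lt_def nx0 vnorm_ge0.
pose u := (vnorm x)^-1 *: x.
have u1 : vnorm u = 1 by rewrite vnormZ ger0_norm ?invr_ge0 ?vnorm_ge0 // mulVf.
have : vnorm (A *m u) <= opnorm A.
  apply: ub_le_sup; last by exists u.
  by exists K => _ [w /= w1 <-]; rewrite -[K]mulr1 -w1 HK.
rewrite /u -scalemxAr vnormZ ger0_norm ?invr_ge0 ?vnorm_ge0 //.
by rewrite ler_pdivrMl // mulrC.
Qed.

Lemma dot_mulmx_le A x : dot (A *m x) (A *m x) <= opnorm A ^+ 2 * dot x x.
Proof.
rewrite -!vnorm_sqr -exprMn ler_pXn2r ?nnegrE ?vnorm_ge0 ?vnorm_mulmx_le //.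
exact: le_trans (vnorm_ge0 _) (vnorm_mulmx_le A x).
Qed.

Hypothesis d_gt0 : (0 < d)%N.

Lemma exists_unit_vector : exists u : 'cV[R]_d, vnorm u = 1.
Proof.
pose x : 'cV[R]_d := const_mx 1.
have x_gt0 : 0 < vnorm x.
  rewrite vnormE sqrtr_gt0 dotxx.
  rewrite (eq_bigr (fun _ => 1)); last by move=> i _; rewrite mxE expr1n.
  by rewrite sumr_const card_ord ltr0n.
exists ((vnorm x)^-1 *: x).
by rewrite vnormZ ger0_norm ?invr_ge0 ?vnorm_ge0 // mulVf // gt_eqF.
Qed.

Lemma opnorm_le A c :
  (forall u, vnorm u = 1 -> vnorm (A *m u) <= c) -> opnorm A <= c.
Proof.
move=> Ac; apply: ge_sup.
  by have [u u1] := exists_unit_vector; exists (vnorm (A *m u)), u.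
by move=> _ [u /= u1 <-]; exact: Ac.
Qed.

Lemma opnorm_ge0 A : 0 <= opnorm A.
Proof.
have [u u1] := exists_unit_vector.
by have := vnorm_mulmx_le A u; rewrite u1 mulr1; apply: le_trans; exact: vnorm_ge0.
Qed.

Lemma opnorm_sqr_le A c : 0 <= c ->
  (forall u, vnorm u = 1 -> dot (A *m u) (A *m u) <= c) -> opnorm A ^+ 2 <= c.
Proof.
move=> c0 Ac; rewrite -(sqr_sqrtr c0) ler_pXn2r ?nnegrE ?opnorm_ge0 ?sqrtr_ge0 //.
by apply: opnorm_le => u u1; rewrite vnormE ler_sqrt // Ac.
Qed.

End OperatorNorm.

Section GramDefect.
Variable R : realType.
Variable d : nat.
Hypothesis d_gt0 : (0 < d)%N.
Variable B : 'M[R]_d.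
Let X := opnorm (1%:M - B^T *m B).

Lemma dot_mulmx_gram_defect x :
  `|dot (B *m x) (B *m x) - dot x x| <= X * dot x x.
Proof.
set M := 1%:M - B^T *m B.
have -> : dot (B *m x) (B *m x) - dot x x = - dot x (M *m x).
  by rewrite dot_mulmxl /M mulmxBl mul1mx -mulmxA dotBr; ring.
rewrite normrN; apply: le_trans (norm_dot_le _ _) _.
rewrite -vnorm_sqr expr2 mulrCA ler_wpM2l ?vnorm_ge0 //.
exact: vnorm_mulmx_le.
Qed.

Lemma opnorm_sqr_le_gram_defect : opnorm B ^+ 2 <= 1 + X.
Proof.
have X0 : 0 <= X by exact: opnorm_ge0.
apply: (opnorm_sqr_le d_gt0) => [|u u1]; first lra.
have := dot_mulmx_gram_defect u; rewrite -(vnorm_sqr u) u1 expr1n mulr1.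
by move/ler_normlP => [_]; lra.
Qed.

Hypothesis B_unit : B \in unitmx.

Lemma opnorm_invmx_sqr_le_gram_defect : opnorm (invmx B) ^+ 2 * (1 - X) <= 1.
Proof.
have [X_ge1|X_lt1] := lerP 1 X.
  by apply: (le_trans _ ler01); rewrite mulr_ge0_le0 ?sqr_ge0 // subr_le0.
have X1_gt0 : 0 < 1 - X by rewrite subr_gt0.
rewrite -ler_pdivlMr // mul1r; apply: (opnorm_sqr_le d_gt0) => [|u u1].
  by rewrite invr_ge0 ltW.
have := dot_mulmx_gram_defect (invmx B *m u).
rewrite mulKVmx // -(vnorm_sqr u) u1 expr1n => /ler_normlP [defect _].
by rewrite -[_^-1]mul1r ler_pdivlMr // mulrBr mulr1; lra.
Qed.

Lemma kappa_sqr_le_gram_defect : kappa B ^+ 2 * (1 - X) <= 1 + X.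
Proof.
have X0 : 0 <= X by exact: opnorm_ge0.
have := opnorm_sqr_le_gram_defect; have := opnorm_invmx_sqr_le_gram_defect.
have := sqr_ge0 (opnorm B); have := sqr_ge0 (opnorm (invmx B)).
rewrite /kappa exprMn; nra.
Qed.

End GramDefect.

Section Subspaces.
Variable R : realType.
Variable d : nat.
Implicit Types (v w : 'cV[R]_d) (A P Z : 'M[R]_d).

Lemma dot_orth_proj P Z v w : is_orth_proj P Z -> Defs.insub Z w ->
  dot w (v - P *m v) = 0.
Proof. by move=> PZ Zw; rewrite /dot (PZ v).2 // mxE. Qed.

Lemma dot_orth_proj_self P Z v : is_orth_proj P Z ->
  dot (P *m v) (P *m v) = dot (P *m v) v.
Proof.
move=> PZ; apply/eqP; rewrite eq_sym -subr_eq0 -dotBr.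
by rewrite (dot_orth_proj _ PZ (PZ v).1).
Qed.

Lemma orth_proj_id P Z w : is_orth_proj P Z -> Defs.insub Z w -> P *m w = w.
Proof.
move=> PZ Zw; apply/eqP; rewrite eq_sym -subr_eq0; apply/eqP/dotxx_eq0.
by rewrite dotBl (dot_orth_proj _ PZ Zw) (dot_orth_proj _ PZ (PZ w).1) subr0.
Qed.

Lemma dot_orth_proj_compl_le P Z v : is_orth_proj P Z ->
  dot (v - P *m v) (v - P *m v) <= dot v v.
Proof.
move=> PZ; have Pv_perp := dot_orth_proj v PZ (PZ v).1.
have decomp : v = (v - P *m v) + P *m v by rewrite subrK.
move: (v - P *m v) Pv_perp decomp => u Pv_perp ->.
rewrite dotDl !dotDr (dotC u (P *m v)) Pv_perp addr0 add0r.
by rewrite lerDl dotxx_ge0.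
Qed.

Lemma maps_onto1 Z : maps_onto 1%:M Z Z.
Proof. by split=> [v|w] Zv; [rewrite mul1mx | exists w; rewrite ?mul1mx]. Qed.

Lemma maps_onto_mul A1 A2 Z1 Z2 Z3 : maps_onto A1 Z1 Z2 -> maps_onto A2 Z2 Z3 ->
  maps_onto (A2 *m A1) Z1 Z3.
Proof.
move=> [A1in A1onto] [A2in A2onto]; split=> [v Z1v|w Z3w].
  by rewrite -mulmxA; apply/A2in/A1in.
have [v2 Z2v2 ->] := A2onto w Z3w; have [v1 Z1v1 ->] := A1onto v2 Z2v2.
by exists v1; rewrite ?mulmxA.
Qed.

End Subspaces.

Lemma invmx_mul (R : comUnitRingType) (n : nat) (A B : 'M[R]_n) :
  A \in unitmx -> B \in unitmx -> invmx (A *m B) = invmx B *m invmx A.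
Proof.
move=> A_unit B_unit; have AB_unit : A *m B \in unitmx by rewrite unitmx_mul A_unit.
rewrite -[RHS]mul1mx -(mulVmx AB_unit) -!mulmxA (mulmxA B) mulmxV // mul1mx.
by rewrite mulmxV // mulmx1.
Qed.

Section Transport.
Variable R : realType.
Variable d : nat.
Variable theta : nat -> 'M[R]_d.

Lemma thetabar_unit t : (forall j, (j < t)%N -> theta j \in unitmx) ->
  thetabar theta t \in unitmx.
Proof.
elim: t => [|t IHt] theta_unit /=; first exact: unitmx1.
by rewrite unitmx_mul theta_unit // IHt // => j /ltnW; apply: theta_unit.
Qed.

Lemma PtsS P t k : Pts theta P t k.+1 =
  invmx (theta (t - k.+1)%N) *m Pts theta P t k *m theta (t - k.+1)%N.
Proof. reflexivity. Qed.

Lemma Pts_thetabar P t k : (forall j, (j < t)%N -> theta j \in unitmx) ->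
  (k <= t)%N ->
  Pts theta P t k = thetabar theta (t - k)%N *m
    (invmx (thetabar theta t) *m P t *m thetabar theta t) *m
    invmx (thetabar theta (t - k)%N).
Proof.
move=> theta_unit; elim: k => [|k IHk] lt_kt.
  have tb_unit := thetabar_unit theta_unit.
  by rewrite subn0 !mulmxA mulmxV // mul1mx mulmxK.
have th_unit : theta (t - k.+1)%N \in unitmx.
  by rewrite theta_unit // subnSK // leq_subr.
have tb_unit : thetabar theta (t - k.+1)%N \in unitmx.
  apply: thetabar_unit => j lt_j; apply: theta_unit.
  exact: leq_trans lt_j (leq_subr _ _).
rewrite [LHS](PtsS P t k) IHk ?(ltnW lt_kt) // -(subnSK lt_kt).
move: (t - k.+1)%N th_unit tb_unit (invmx (thetabar theta t) *m P t *m thetabar theta t)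
  => j th_unit tb_unit C.
change (thetabar theta j.+1) with (theta j *m thetabar theta j).
by rewrite invmx_mul // !mulmxA mulVmx // mul1mx mulmxKV.
Qed.

Lemma thetabar_maps_onto (Z : nat -> 'M[R]_d) t :
  (forall j, (j < t)%N -> maps_onto (theta j) (Z j) (Z j.+1)) ->
  maps_onto (thetabar theta t) (Z 0%N) (Z t).
Proof.
elim: t => [|t IHt] theta_onto; first exact: maps_onto1.
apply: maps_onto_mul (theta_onto t (ltnSn t)).
by apply: IHt => j /ltnW; apply: theta_onto.
Qed.

End Transport.

Lemma perp_pair_kappa_bound (R : realType) (d : nat) (B : 'M[R]_d) (w u : 'cV[R]_d) l :
  B \in unitmx -> dot w u = 0 ->
  dot (B *m w) (B *m w) = dot (B *m w) (B *m u) -> 0 <= l ->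
  4 * l * dot w w <= (kappa B ^+ 2 - 1) * (dot w w + l ^+ 2 * dot u u).
Proof.
move=> B_unit wu0 Bw_proj l0.
set a := opnorm B; set b := opnorm (invmx B).
set c := dot (B *m w) (B *m w); set beta := dot (B *m u) (B *m u).
have dot_w_lu m : dot (1 *: w + m *: u) (1 *: w + m *: u) =
    dot w w + m ^+ 2 * dot u u.
  by rewrite dot_lincomb wu0; ring.
have dot_Bw_lBu m : dot (B *m (1 *: w + m *: u)) (B *m (1 *: w + m *: u)) =
    c + 2 * m * c + m ^+ 2 * beta.
  by rewrite mulmxDr -!scalemxAr dot_lincomb -Bw_proj -/c -/beta; ring.
have upper := dot_mulmx_le B (1 *: w + l *: u).
rewrite dot_Bw_lBu dot_w_lu -/a in upper.
have lower := dot_mulmx_le (invmx B) (B *m (1 *: w + (- l) *: u)).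
rewrite mulKmx // dot_Bw_lBu dot_w_lu -/b sqrrN in lower.
have w_le := dot_mulmx_le (invmx B) (B *m w).
rewrite mulKmx // -/b -/c in w_le.
have := ler_wpM2l (sqr_ge0 b) upper.
have := ler_wpM2l (mulr_ge0 (ler0n _ 4) l0) w_le.
rewrite /kappa -/a -/b exprMn; lra.
Qed.

Lemma le_of_cubic_le (R : realFieldType) (t m k K : R) :
  0 <= t -> 0 <= m <= 1 -> k <= K -> 0 <= K ->
  4 * t * t ^+ 2 <= k * (t ^+ 2 + t ^+ 2 * m) -> t <= K.
Proof.
move=> t_ge0 /andP[m_ge0 m_le1] k_le K_ge0 cubic.
have s_ge0 : 0 <= t ^+ 2 + t ^+ 2 * m by rewrite addr_ge0 ?mulr_ge0 ?sqr_ge0.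
have s_le : t ^+ 2 + t ^+ 2 * m <= 2 * t ^+ 2 by have := sqr_ge0 t; nra.
have : 4 * t * t ^+ 2 <= K * (2 * t ^+ 2).
  apply: (le_trans cubic); apply: (le_trans (ler_wpM2r s_ge0 k_le)).
  exact: ler_wpM2l.
have [-> //|t_neq0] := eqVneq t 0.
have : 0 < t ^+ 2 by rewrite exprn_gt0 // lt_def t_neq0.
nra.
Qed.

Section ConjugatedProjection.
Variable R : realType.
Variable d : nat.
Variables B P0 Ps Z0 Zs : 'M[R]_d.
Hypothesis B_unit : B \in unitmx.
Hypothesis P0Z0 : is_orth_proj P0 Z0.
Hypothesis PsZs : is_orth_proj Ps Zs.
Hypothesis B_onto : maps_onto B Z0 Zs.
Let Q := invmx B *m Ps *m B.

Lemma conj_orth_proj_id p : Defs.insub Z0 p -> Q *m p = p.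
Proof.
move=> Z0p; rewrite /Q -!mulmxA (orth_proj_id PsZs (B_onto.1 p Z0p)).
exact: mulKmx.
Qed.

Lemma conj_orth_proj_in v : Defs.insub Z0 (Q *m v).
Proof.
have [y Z0y BPsv] := B_onto.2 _ (PsZs (B *m v)).1.
by rewrite /Q -!mulmxA BPsv mulKmx.
Qed.

Hypothesis d_gt0 : (0 < d)%N.

Lemma opnorm_conj_orth_proj_sub :
  opnorm (Q - P0) <= (1 + kappa B ^+ 2) * opnorm (1%:M - B^T *m B).
Proof.
have kappa_le : kappa B ^+ 2 - 1 <= (1 + kappa B ^+ 2) * opnorm (1%:M - B^T *m B).
  by have := kappa_sqr_le_gram_defect d_gt0 B_unit; nra.
apply: opnorm_le => // v v1.
set u := v - P0 *m v.
have -> : (Q - P0) *m v = Q *m u.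
  by rewrite mulmxBl /u mulmxBr (conj_orth_proj_id (P0Z0 v).1).
have wu0 : dot (Q *m u) u = 0.
  by rewrite /u (dot_orth_proj v P0Z0 (conj_orth_proj_in _)).
have Bw_dot : dot (B *m (Q *m u)) (B *m (Q *m u)) = dot (B *m (Q *m u)) (B *m u).
  by rewrite /Q -!mulmxA mulKVmx // (dot_orth_proj_self _ PsZs).
have u_le1 : dot u u <= 1.
  by rewrite -(expr1n R 2) -{1}v1 vnorm_sqr; exact: dot_orth_proj_compl_le.
apply: (@le_of_cubic_le _ _ (dot u u) _ _ (vnorm_ge0 _) _ kappa_le).
- by rewrite dotxx_ge0 u_le1.
- by rewrite mulr_ge0 ?opnorm_ge0 // addr_ge0 // sqr_ge0.
- have := perp_pair_kappa_bound B_unit wu0 Bw_dot (vnorm_ge0 (Q *m u)).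
  by rewrite -(vnorm_sqr (Q *m u)).
Qed.

End ConjugatedProjection.

Theorem mainTheorem7 (R : realType) (r d T : nat)
  (Z : nat -> 'M[R]_d) (P : nat -> 'M[R]_d) (theta : nat -> 'M[R]_d) :
  (1 <= r)%N -> (r <= d)%N -> (1 <= T)%N ->
  (forall t, (t <= T)%N -> \rank (Z t) = r) ->
  (forall t, (t <= T)%N -> is_orth_proj (P t) (Z t)) ->
  (forall t, (t < T)%N -> theta t \in unitmx) ->
  (forall t, (t < T)%N -> maps_onto (theta t) (Z t) (Z t.+1)) ->
  forall s, (s <= T)%N ->
    opnorm (Pts theta P s s - P 0%N) <=
      (1 + kappa (thetabar theta s) ^+ 2) *
      opnorm (1%:M - (thetabar theta s)^T *m thetabar theta s).
Proof.
move=> r_gt0 le_rd _ _ PZ theta_unit theta_onto s le_sT.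
have d_gt0 : (0 < d)%N := leq_trans r_gt0 le_rd.
have theta_unit_s j : (j < s)%N -> theta j \in unitmx.
  by move=> lt_js; apply/theta_unit/(leq_trans lt_js).
have theta_onto_s j : (j < s)%N -> maps_onto (theta j) (Z j) (Z j.+1).
  by move=> lt_js; apply/theta_onto/(leq_trans lt_js).
rewrite Pts_thetabar // subnn.
change (thetabar theta 0) with (1%:M : 'M[R]_d).
rewrite mul1mx invmx1 mulmx1.
apply: opnorm_conj_orth_proj_sub => //.
- exact: thetabar_unit.
- exact: PZ.
- exact: PZ.
- exact: thetabar_maps_onto.
Qed.
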